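(* Let $(p_\omega)_{\omega\in\Omega}$ be a fixed probability distribution on the finite scenario set $\Omega$, and $\Phi_N(\mathbf{x})=\sum_{\omega\in\Omega}p_\omega Q_\omega(\mathbf{x})$. Let $\hat{\mathbf{x}}\in\mathcal{X}$ and for each $\omega\in\Omega$ let $\hat{\mathbf{S}}^\omega=(\hat S^\omega_1,\dots,\hat S^\omega_k)$ be an optimal solution of the problem defining $Q_\omega(\hat{\mathbf{x}})$. For each $\omega,q$ fix an ordering $\hat S^\omega_q=\{i^\omega_{q,1},\dots,i^\omega_{q,T^\omega_q}\}$ and for $1\le t\le T^\omega_q$ let $\hat{\mathbf{S}}^\omega_{q,(t)}=(\hat S^\omega_1,\dots,\hat S^\omega_{q-1},\{i^\omega_{q,1},\dots,i^\omega_{q,t-1}\},\emptyset,\dots,\emptyset)$. Then for every $\mathbf{x}\in\mathcal{X}$, $$\Phi_N(\mathbf{x})\;\ge\;\Phi_N(\hat{\mathbf{x}})-\sum_{q=1}^k\sum_{\omega\in\Omega}\sum_{t=1}^{T^\omega_q}p_\omega\,\rho^\omega_{q,i^\omega_{q,t}}(\hat{\mathbf{S}}^\omega_{q,(t)})\,\xi^\omega_{i^\omega_{q,t}}\,x_{q,i^\omega_{q,t}}.$$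
   Context: Let $n,k$ be positive integers and $N=\{1,\dots,n\}$. $\mathbb{X}(N,k)$ denotes the set of $k$-tuples $\mathbf{S}=(S_1,\dots,S_k)$ of pairwise disjoint subsets of $N$; such a tuple is identified with $\mathbf{s}\in\{0,1\}^{kn}$ where $s_{q,i}=1$ iff $i\in S_q$. For $\mathbf{X},\mathbf{Y}\in\mathbb{X}(N,k)$ let $\mathbf{X}\sqcap\mathbf{Y}=(X_1\cap Y_1,\dots,X_k\cap Y_k)$ and $\mathbf{X}\sqcup\mathbf{Y}$ be the tuple whose $i$-th component is $(X_i\cup Y_i)\setminus\bigcup_{q\ne i}(X_q\cup Y_q)$. A function $f:\mathbb{X}(N,k)\to\mathbb{R}$ is $k$-submodular if $f(\mathbf{X})+f(\mathbf{Y})\ge f(\mathbf{X}\sqcap\mathbf{Y})+f(\mathbf{X}\sqcup\mathbf{Y})$ for all $\mathbf{X},\mathbf{Y}$, and monotone if $f(\mathbf{X})\le f(\mathbf{Y})$ whenever $X_q\subseteq Y_q$ for all $q$. $\boldsymbol{\emptyset}=(\emptyset,\dots,\emptyset)$. Given nonnegative integer budgets $A_1,\dots,A_k$ and $D_1,\dots,D_k$, the attacker's feasible set is $\mathcal{X}=\{\mathbf{x}\in\{0,1\}^{kn}:\sum_{i=1}^n x_{q,i}\le A_q\ \forall q,\ \sum_{q=1}^k x_{q,i}\le 1\ \forall i\in N\}$. Stochastic setting: $\Omega$ is a finite set of scenarios; for each $\omega\in\Omega$ we are given $\xi^\omega\in\{0,1\}^n$ and a monotone $k$-submodular function $f^\omega:\mathbb{X}(N,k)\to\mathbb{R}$,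 with marginal gains $\rho^\omega_{q,i}(\mathbf{X})=f^\omega(X_1,\dots,X_q\cup\{i\},\dots,X_k)-f^\omega(\mathbf{X})$ for $i\notin\bigcup_r X_r$. For $\mathbf{x}\in\mathcal{X}$, $Q_\omega(\mathbf{x})=\max\{f^\omega(\mathbf{S}):\mathbf{S}\in\mathbb{X}(N,k),\ s_{q,i}\le 1-x_{q,i}\xi^\omega_i\ \forall q,i,\ \sum_{i=1}^n s_{q,i}\le D_q\ \forall q\}$. *)

From HB Require Import structures.
From mathcomp Require Import all_boot all_order all_algebra.
Set Implicit Arguments. Unset Strict Implicit. Unset Printing Implicit Defensive.
Import Order.TTheory GRing.Theory Num.Theory.
Local Open Scope ring_scope.

(* Ground set N = 'I_n, types 'I_k.  A k-tuple of subsets of N is a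
   {ffun 'I_k -> {set 'I_n}}; it belongs to X(N,k) iff pairwise disjoint. *)
Definition ktuple (n k : nat) := {ffun 'I_k -> {set 'I_n}}.

Definition kdisj (n k : nat) (S : ktuple n k) : bool :=
  [forall q : 'I_k, forall r : 'I_k, (q != r) ==> [disjoint S q & S r]].

Definition kempty (n k : nat) : ktuple n k := [ffun _ => set0].

Definition kmeet (n k : nat) (X Y : ktuple n k) : ktuple n k :=
  [ffun i => X i :&: Y i].

Definition kjoin (n k : nat) (X Y : ktuple n k) : ktuple n k :=
  [ffun i => (X i :|: Y i) :\: \bigcup_(q | q != i) (X q :|: Y q)].

Definition ksubmodular (R : realFieldType) (n k : nat) (f : ktuple n k -> R) :=
  forall X Y : ktuple n k, kdisj X -> kdisj Y ->
    f (kmeet X Y) + f (kjoin X Y) <= f X + f Y.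

Definition kmonotone (R : realFieldType) (n k : nat) (f : ktuple n k -> R) :=
  forall X Y : ktuple n k, kdisj X -> kdisj Y ->
    (forall q, X q \subset Y q) -> f X <= f Y.

Definition kmarg (R : realFieldType) (n k : nat) (f : ktuple n k -> R)
  (q : 'I_k) (i : 'I_n) (X : ktuple n k) : R :=
  f [ffun r => if r == q then i |: X r else X r] - f X.

Definition attack_feasible (n k : nat) (A : 'I_k -> nat)
  (x : 'I_k -> 'I_n -> bool) : Prop :=
  (forall q, #|[set i | x q i]| <= A q)%N /\
  (forall i, #|[set q | x q i]| <= 1)%N.

Definition follower_feasible (n k : nat) (D : 'I_k -> nat)
  (xi : 'I_n -> bool) (x : 'I_k -> 'I_n -> bool) (S : ktuple n k) : bool :=
  kdisj S &&
  [forall q : 'I_k, forall i : 'I_n, (i \in S q) ==> ~~ (x q i && xi i)] &&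
  [forall q : 'I_k, #|S q| <= D q]%N.

(* Q_omega(x) = max of f over feasible S (the empty tuple is feasible) *)
Definition Qval (R : realFieldType) (n k : nat) (D : 'I_k -> nat)
  (xi : 'I_n -> bool) (f : ktuple n k -> R) (x : 'I_k -> 'I_n -> bool) : R :=
  \big[Num.max/f (kempty n k)]_(S : ktuple n k | follower_feasible D xi x S) f S.

Definition optimal (R : realFieldType) (n k : nat) (D : 'I_k -> nat)
  (xi : 'I_n -> bool) (f : ktuple n k -> R) (x : 'I_k -> 'I_n -> bool)
  (S : ktuple n k) : Prop :=
  follower_feasible D xi x S /\
  forall S', follower_feasible D xi x S' -> f S' <= f S.

Definition PhiN (R : realFieldType) (Omega : finType) (n k : nat)
  (p : Omega -> R) (D : 'I_k -> nat) (xi : Omega -> 'I_n -> bool)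
  (f : Omega -> ktuple n k -> R) (x : 'I_k -> 'I_n -> bool) : R :=
  \sum_(w : Omega) p w * Qval D (xi w) (f w) x.

(* hat S_{q,(t)} with 0-based t: (S_1,...,S_{q-1}, first t elements of the
   ordering of S_q, empty, ..., empty) *)
Definition prefix_tuple (n k : nat) (S : ktuple n k) (q : 'I_k)
  (s : seq 'I_n) (t : nat) : ktuple n k :=
  [ffun r : 'I_k => if (r < q)%N then S r
                    else if r == q then [set i in take t s] else set0].

From HB Require Import structures.
From mathcomp Require Import all_boot all_order all_algebra.
From mathcomp Require Import lra.
Import Order.TTheory GRing.Theory Num.Theory.
Local Open Scope ring_scope.

(* Fix a scenario and let K keep exactly the elements not blocked by x.  Removing
   the blocked elements from the optimal solution Shat for xhat leaves a solution
   feasible for x, so it suffices to bound the loss f(T) - f(filter K T) at T = Shat.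
   Build Shat element by element along the given orderings: adding a blocked i
   raises the loss by exactly its marginal gain at T, and adding an unblocked i
   raises it by its gain at T minus its gain at filter K T, which is <= 0 since
   k-submodularity makes gains diminish on larger tuples.  Averaging over the
   scenarios gives the theorem. *)

Section KTuples.
Context {n k : nat}.
Implicit Types (S T X Y : ktuple n k) (q r : 'I_k) (i j : 'I_n).

Definition kadd T q i : ktuple n k := [ffun r => if r == q then i |: T r else T r].

Definition kfilter (K : 'I_k -> 'I_n -> bool) T : ktuple n k :=
  [ffun r => [set j in T r | K r j]].

Lemma in_kadd T q i r j : (j \in kadd T q i r) = (r == q) && (j == i) || (j \in T r).
Proof. by rewrite ffunE; case: (r == q); rewrite ?inE. Qed.

Lemma in_kfilter K T r j : (j \in kfilter K T r) = (j \in T r) && K r j.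
Proof. by rewrite ffunE inE. Qed.

Lemma kdisjP T :
  reflect (forall r r' j, r != r' -> j \in T r -> j \in T r' -> False) (kdisj T).
Proof.
apply: (iffP forallP) => [H r r' j nrr jr jr'|H r].
  have /forallP/(_ r')/implyP/(_ nrr) := H r.
  by move/disjointFr/(_ jr); rewrite jr'.
apply/forallP => r'; apply/implyP => nrr.
rewrite disjoint_subset; apply/subsetP => j jr; rewrite inE; apply/negP => jr'.
exact: (H r r' j).
Qed.

Lemma kdisj_sub {S T} : kdisj S -> (forall r, T r \subset S r) -> kdisj T.
Proof.
move=> /kdisjP dS sub; apply/kdisjP => r r' j nrr jr jr'.
exact: (dS r r' j nrr (subsetP (sub r) _ jr) (subsetP (sub r') _ jr')).
Qed.

Lemma kdisj_kadd {T} q i : kdisj T -> (forall r, i \notin T r) -> kdisj (kadd T q i).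
Proof.
move=> /kdisjP dT iT; apply/kdisjP => r r' j nrr; rewrite !in_kadd.
case/orP=> [/andP[/eqP rq /eqP ji]|jr]; case/orP=> [/andP[/eqP r'q /eqP ji']|jr'].
- by move: nrr; rewrite rq r'q eqxx.
- by move: (iT r'); rewrite -ji jr'.
- by move: (iT r); rewrite -ji' jr.
- exact: (dT r r' j).
Qed.

Lemma kfilter_sub K T r : kfilter K T r \subset T r.
Proof. by apply/subsetP => j; rewrite in_kfilter => /andP[]. Qed.

Lemma kfilter_kadd K T q i :
  kfilter K (kadd T q i) = if K q i then kadd (kfilter K T) q i else kfilter K T.
Proof.
apply/ffunP => r; apply/setP => j.
case Kqi: (K q i); rewrite !(in_kfilter, in_kadd) andb_orl;
  case: (r =P q) => [->|_] //=; case: (j =P i) => [->|_] //=; by rewrite Kqi.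
Qed.

Lemma kfilter_kempty K : kfilter K (kempty n k) = kempty n k.
Proof. by apply/ffunP => r; apply/setP => j; rewrite in_kfilter !ffunE inE. Qed.

Lemma kjoin_disj X Y :
  kdisj [ffun r => X r :|: Y r] -> kjoin X Y = [ffun r => X r :|: Y r].
Proof.
move=> /kdisjP dXY; apply/ffunP => r; rewrite !ffunE; apply/setP => j.
rewrite inE andb_idl // => jr; apply/bigcupP => -[s /= nsr js].
by apply: (dXY s r j nsr); rewrite ffunE.
Qed.

Lemma kmarg_antitone {R : realFieldType} {g : ktuple n k -> R} q i {X Y} :
  ksubmodular g -> kdisj Y -> (forall r, X r \subset Y r) ->
  (forall r, i \notin Y r) -> kmarg g q i Y <= kmarg g q i X.
Proof.
move=> gsub dY XY iY.
have XYi r : kadd X q i r \subset kadd Y q i r.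
  apply/subsetP => j; rewrite !in_kadd.
  by case/orP=> [->|/(subsetP (XY r)) ->]; rewrite ?orbT.
have dYi := kdisj_kadd q i dY iY.
have dXi := kdisj_sub dYi XYi.
have meet : kmeet (kadd X q i) Y = X.
  apply/ffunP => r; apply/setP => j; rewrite ffunE inE in_kadd.
  apply/idP/idP => [/andP[/orP[/andP[_ /eqP ->]|//] iYr]|jX].
    by rewrite (negbTE (iY r)) in iYr.
  by rewrite jX orbT (subsetP (XY r)).
have union : [ffun r => kadd X q i r :|: Y r] = kadd Y q i.
  apply/ffunP => r; apply/setP => j; rewrite ffunE inE !in_kadd -orbA.
  by apply/orb_id2l => _; apply/orb_idl/subsetP.
have := gsub _ _ dXi dY; rewrite meet kjoin_disj union //.
by rewrite /kmarg /kadd => ?; lra.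
Qed.

Definition kprefix S (m : nat) : ktuple n k :=
  [ffun r : 'I_k => if (r < m)%N then S r else set0].

Lemma kprefix0 S : kprefix S 0 = kempty n k.
Proof. by apply/ffunP => r; rewrite !ffunE. Qed.

Lemma kprefix_all S : kprefix S k = S.
Proof. by apply/ffunP => r; rewrite ffunE ltn_ord. Qed.

Lemma prefix_tuple0 S q s : prefix_tuple S q s 0 = kprefix S q.
Proof.
apply/ffunP => r; rewrite !ffunE take0.
by case: ifP => // _; case: ifP => // _; apply/setP => j; rewrite !inE.
Qed.

Lemma prefix_tuple_size {S q s} :
  [set i in s] = S q -> prefix_tuple S q s (size s) = kprefix S q.+1.
Proof.
move=> sSq; apply/ffunP => r; rewrite !ffunE take_size ltnS -val_eqE /=.
by case: (ltngtP r q) => // /val_inj ->.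
Qed.

Lemma prefix_tuple_succ {S q s t} i0 : (t < size s)%N ->
  prefix_tuple S q s t.+1 = kadd (prefix_tuple S q s t) q (nth i0 s t).
Proof.
move=> ts; apply/ffunP => r; rewrite !ffunE.
case: ltnP => [rq|_]; first by rewrite -val_eqE /= ltn_eqF.
case: eqP => // _; rewrite (take_nth i0 ts).
by apply/setP => j; rewrite !inE mem_rcons in_cons.
Qed.

Lemma prefix_tuple_sub {S q s} t r :
  [set i in s] = S q -> prefix_tuple S q s t r \subset S r.
Proof.
move=> sSq; rewrite ffunE; case: ltnP => // _.
case: eqP => [->|_]; last exact: sub0set.
by rewrite -sSq; apply/subsetP => j; rewrite !inE; apply: mem_take.
Qed.

Lemma prefix_tuple_notin {S q s t} r i0 :
  kdisj S -> uniq s -> [set i in s] = S q -> (t < size s)%N ->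
  nth i0 s t \notin prefix_tuple S q s t r.
Proof.
move=> /kdisjP dS us sSq ts; rewrite ffunE; case: ltnP => [rq|_].
  apply/negP => iSr; apply: (dS r q _ _ iSr); first by rewrite neq_ltn rq.
  by rewrite -sSq inE mem_nth.
case: eqP => _; last by rewrite inE.
by rewrite inE in_take ?mem_nth // index_uniq // ltnn.
Qed.

End KTuples.

Section FilterLoss.
Context {R : realFieldType} {n k : nat}.
Variable g : ktuple n k -> R.
Hypothesis gsub : ksubmodular g.
Variable K : 'I_k -> 'I_n -> bool.

Definition kfilter_loss (T : ktuple n k) : R := g T - g (kfilter K T).

Lemma kfilter_loss_kadd {T} q i : kdisj T -> (forall r, i \notin T r) ->
  kfilter_loss (kadd T q i) <= kfilter_loss T + kmarg g q i T * (~~ K q i)%:R.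
Proof.
move=> dT iT; rewrite /kfilter_loss kfilter_kadd.
case Kqi: (K q i); last by rewrite mulr1 /kmarg /kadd; lra.
have := kmarg_antitone q i gsub dT (kfilter_sub K T) iT.
by rewrite mulr0 /kmarg /kadd; lra.
Qed.

Variables (S : ktuple n k) (s : 'I_k -> seq 'I_n) (i0 : 'I_n).
Hypotheses (dS : kdisj S) (s_uniq : forall q, uniq (s q))
           (s_enum : forall q, [set i in s q] = S q).

Definition blocked_marginals q : R := \sum_(0 <= t < size (s q))
  kmarg g q (nth i0 (s q) t) (prefix_tuple S q (s q) t) * (~~ K q (nth i0 (s q) t))%:R.

Lemma kfilter_loss_block (q : 'I_k) :
  kfilter_loss (kprefix S q.+1) <= kfilter_loss (kprefix S q) + blocked_marginals q.
Proof.
rewrite /blocked_marginals -(prefix_tuple0 S q (s q)) -(prefix_tuple_size (s_enum q)).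
elim: {-2}(size (s q)) (leqnn (size (s q))) => [|t IHt] ts.
  by rewrite big_geq // addr0.
rewrite big_nat_recr //= (prefix_tuple_succ i0 ts).
have Ti := kfilter_loss_kadd q (nth i0 (s q) t)
  (kdisj_sub dS (fun r => prefix_tuple_sub t r (s_enum q)))
  (fun r => prefix_tuple_notin r i0 dS (s_uniq q) (s_enum q) ts).
have := IHt (ltnW ts); lra.
Qed.

Lemma kfilter_loss_kprefix m : (m <= k)%N ->
  kfilter_loss (kprefix S m) <= \sum_(q : 'I_k | (q < m)%N) blocked_marginals q.
Proof.
elim: m => [|m IHm] mk.
  by rewrite kprefix0 /kfilter_loss kfilter_kempty subrr big_pred0.
rewrite (bigD1 (Ordinal mk)) //= (eq_bigl (fun q : 'I_k => (q < m)%N)); last first.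
  by move=> q; rewrite ltnS -val_eqE /= ltn_neqAle andbC.
have := kfilter_loss_block (Ordinal mk); have := IHm (ltnW mk); lra.
Qed.

Lemma kfilter_loss_le_sum : kfilter_loss S <= \sum_(q : 'I_k) blocked_marginals q.
Proof.
rewrite -(kprefix_all S) (eq_bigl (fun q : 'I_k => (q < k)%N)) => [|q].
  exact: kfilter_loss_kprefix.
by rewrite ltn_ord.
Qed.

End FilterLoss.

Section Follower.
Context {R : realFieldType} {n k : nat} {D : 'I_k -> nat} {xi : 'I_n -> bool}.
Implicit Types (f : ktuple n k -> R) (x : 'I_k -> 'I_n -> bool) (S : ktuple n k).

Lemma follower_feasible_kempty x : follower_feasible D xi x (kempty n k).
Proof.
apply/andP; split; [apply/andP; split|].
- by apply/kdisjP => r r' j _; rewrite ffunE inE.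
- by apply/forallP => q; apply/forallP => i; rewrite ffunE inE.
- by apply/forallP => q; rewrite ffunE cards0.
Qed.

Lemma Qval_ge f {x S} : follower_feasible D xi x S -> f S <= Qval D xi f x.
Proof. exact: le_bigmax_cond. Qed.

Lemma Qval_optimal {f x S} : optimal D xi f x S -> Qval D xi f x = f S.
Proof.
case=> fS Sopt; apply/le_anti/andP; split; last exact: Qval_ge.
by apply: bigmax_le => [|S' /Sopt //]; apply/Sopt/follower_feasible_kempty.
Qed.

Lemma follower_feasible_unblocked {x'} x {S} :
  follower_feasible D xi x' S ->
  follower_feasible D xi x (kfilter (fun q i => ~~ (x q i && xi i)) S).
Proof.
case/andP=> /andP[dS _] /forallP cardS; apply/andP; split; [apply/andP; split|].
- exact: kdisj_sub dS (kfilter_sub _ _).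
- by apply/forallP => q; apply/forallP => i; apply/implyP; rewrite in_kfilter => /andP[].
- by apply/forallP => q; apply: leq_trans (cardS q); apply/subset_leq_card/kfilter_sub.
Qed.

End Follower.

Lemma Qval_sub_marginals_le (R : realFieldType) n k (D : 'I_k -> nat)
  (xi : 'I_n -> bool) (f : ktuple n k -> R) xhat (Shat : ktuple n k)
  (s : 'I_k -> seq 'I_n) x i0 :
  ksubmodular f -> optimal D xi f xhat Shat ->
  (forall q, uniq (s q) /\ [set i in s q] = Shat q) ->
  Qval D xi f xhat
    - \sum_(q : 'I_k) blocked_marginals f (fun q i => ~~ (x q i && xi i)) Shat s i0 q
  <= Qval D xi f x.
Proof.
move=> fsub Sopt hs; rewrite (Qval_optimal Sopt).
have [fS _] := Sopt; have /andP[/andP[dS _] _] := fS.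
have := Qval_ge f (follower_feasible_unblocked x fS).
have := kfilter_loss_le_sum _ fsub (fun q i => ~~ (x q i && xi i)) _ _ i0 dS
  (fun q => (hs q).1) (fun q => (hs q).2).
rewrite /kfilter_loss; lra.
Qed.

Theorem theorem3 (R : realFieldType) (n k : nat) (Omega : finType)
  (p : Omega -> R) (xi : Omega -> 'I_n -> bool)
  (f : Omega -> ktuple n k -> R) (A D : 'I_k -> nat)
  (xhat : 'I_k -> 'I_n -> bool) (Shat : Omega -> ktuple n k)
  (ord : Omega -> 'I_k -> seq 'I_n) :
  (0 < n)%N -> (0 < k)%N ->
  (forall w, 0 <= p w) -> \sum_(w : Omega) p w = 1 ->
  (forall w, ksubmodular (f w)) -> (forall w, kmonotone (f w)) ->
  attack_feasible A xhat ->
  (forall w, optimal D (xi w) (f w) xhat (Shat w)) ->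
  (forall w q, uniq (ord w q) /\ [set i in ord w q] = Shat w q) ->
  forall x : 'I_k -> 'I_n -> bool, attack_feasible A x ->
  PhiN p D xi f xhat -
    \sum_(q : 'I_k) \sum_(w : Omega) \sum_(t < size (ord w q))
      (let i := tnth (in_tuple (ord w q)) t in
       p w * kmarg (f w) q i (prefix_tuple (Shat w) q (ord w q) t)
           * (xi w i)%:R * (x q i)%:R)
  <= PhiN p D xi f x.
Proof.
move=> n_gt0 _ p_ge0 _ f_sub _ _ Shat_opt ord_enum x _.
pose i0 : 'I_n := Ordinal n_gt0.
rewrite exchange_big /PhiN -sumrB; apply: ler_sum => w _.
set K := fun q i => ~~ (x q i && xi w i).
have -> : \sum_(q : 'I_k) \sum_(t < size (ord w q))
      (let i := tnth (in_tuple (ord w q)) t in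
       p w * kmarg (f w) q i (prefix_tuple (Shat w) q (ord w q) t)
           * (xi w i)%:R * (x q i)%:R)
   = p w * \sum_(q : 'I_k) blocked_marginals (f w) K (Shat w) (ord w) i0 q.
  rewrite mulr_sumr; apply: eq_bigr => q _; rewrite /blocked_marginals big_mkord mulr_sumr.
  apply: eq_bigr => t _ /=; rewrite (tnth_nth i0) /= /K negbK.
  by case: (x q _); case: (xi w _); rewrite /= ?(mulr0, mulr1, mulrA).
rewrite -mulrBr ler_wpM2l //.
exact: Qval_sub_marginals_le (f_sub w) (Shat_opt w) (ord_enum w).
Qed.
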